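(* Let $n\ge 1$ and let $T$ be a Cayley tree on $[n]$ rooted at $1$. Then $\mathrm{lead}(T) = n - \mathrm{impe}(T)$, where $\mathrm{lead}(T)$ is the number of leading vertices of $T$ and $\mathrm{impe}(T)$ is the number of improper edges of $T$.
   Context: A Cayley tree of size $n$ is a tree whose vertices are labelled bijectively by $[n]=\{1,\dots,n\}$; we consider such trees rooted at the vertex $1$ and orient each edge $(i,j)$ from the parent $i$ to the child $j$. For a vertex $v$, $\beta_T(v)$ is the smallest label among the descendants of $v$ ($v$ itself included). An edge $(i,j)$ is improper if $\lambda_T(i) > \beta_T(j)$ (where $\lambda_T$ denotes the label), and proper otherwise. For a vertex $i$, let $L(i)=(1=a_0,a_1,\dots,a_k=i)$ be the path from the root to $i$; the greater ancestors path of $i$ is the longest suffix $(a_p,a_{p+1},\dots,a_k=i)$ of $L(i)$ such that every vertex $j$ on it satisfies $\lambda_T(j)\ge \lambda_T(i)$. The vertex $i$ is a leading vertex if $\beta_T(a_p)=\lambda_T(i)$. *)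

From mathcomp Require Import all_boot.
Set Implicit Arguments. Unset Strict Implicit. Unset Printing Implicit Defensive.

(* A Cayley tree on [n] rooted at 1 is encoded by its parent map.
   Vertex v : 'I_n carries the label  lab v = v + 1, so the root (label 1)
   is the vertex with value 0.  The parent map par fixes the root and every
   vertex reaches the root by iterating par; the edges of the tree are the
   pairs (par v, v) for v not the root, oriented from parent to child. *)

Section CayleyTree.
Variable n : nat.
Implicit Types (par : 'I_n -> 'I_n) (u v w : 'I_n).

Definition lab v : nat := (val v).+1.

Definition is_root v : bool := lab v == 1.

Definition is_rooted_cayley_tree par : bool :=
  [forall v, is_root v ==> (par v == v)] &&
  [forall v, is_root (iter n par v)].

(* anc par u w : u lies on the root-to-w path L(w), i.e. w is a descendant
   of u (w itself included). *)
Definition anc par u w : bool := [exists k : 'I_n.+1, iter k par w == u].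

Definition beta par v : nat := \big[minn/n.+1]_(w | anc par v w) lab w.

Definition improper_child par v : bool :=
  ~~ is_root v && (beta par v < lab (par v)).

Definition impe par : nat := #|[set v | improper_child par v]|.

(* u = a_p is the first vertex of the greater ancestors path of i:
   u is on L(i), all vertices on L(i) from u to i have label >= lab i, and
   the suffix cannot be extended (u is the root or its parent has label
   < lab i). *)
Definition gap_start par i u : bool :=
  [&& anc par u i,
      [forall w, (anc par u w && anc par w i) ==> (lab i <= lab w)] &
      (is_root u || (lab (par u) < lab i))].

Definition leading par i : bool :=
  [exists u, gap_start par i u && (beta par u == lab i)].

Definition lead par : nat := #|[set i | leading par i]|.

End CayleyTree.

From mathcomp Require Import all_boot.

Set Implicit Arguments.
Unset Strict Implicit.
Unset Printing Implicit Defensive.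

(* Send every vertex v that is the root or the child of a proper edge to the
   vertex argbeta v of smallest label below it.  Properness says the parent
   of v has label at most beta v, and equality is impossible since it would
   close a cycle through v; so v starts the greater ancestors path of
   argbeta v, which is therefore leading.  Conversely the start u of the
   greater ancestors path of a leading vertex i is proper with argbeta u = i,
   and that start is unique.  Hence the leading vertices are in bijection
   with the n - impe(T) vertices that do not head an improper edge. *)

Lemma bigmin_le (I : eqType) (r : seq I) (P : pred I) (F : I -> nat) m i :
  i \in r -> P i -> \big[minn/m]_(j <- r | P j) F j <= F i.
Proof.
elim: r => // j r IHr; rewrite inE big_cons => /predU1P[<- -> | ri Pi].
  exact: geq_minl.
by case: ifP => _; rewrite ?geq_min IHr ?orbT.
Qed.

Lemma bigmin_ge (I : Type) (r : seq I) (P : pred I) (F : I -> nat) m k :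
  k <= m -> (forall i, P i -> k <= F i) -> k <= \big[minn/m]_(i <- r | P i) F i.
Proof.
by move=> km kF; elim/big_ind: _ => // x y kx ky; rewrite leq_min kx ky.
Qed.

Lemma lab_inj n : injective (@lab n).
Proof. by move=> u v [] /val_inj. Qed.

Section Descendants.
Variables (n : nat) (par : 'I_n -> 'I_n).
Implicit Types (i u v w : 'I_n).

Lemma ancP u w : reflect (exists2 k, k <= n & iter k par w = u) (anc par u w).
Proof.
apply: (iffP existsP) => [[k /eqP <-] | [k kn <-]].
  by exists k; first exact: ltn_ord k.
by exists (Ordinal (kn : k < n.+1)).
Qed.

Lemma anc_refl v : anc par v v.
Proof. by apply/ancP; exists 0. Qed.

Lemma beta_le v w : anc par v w -> beta par v <= lab w.
Proof. exact/bigmin_le/mem_index_enum. Qed.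

Definition argbeta v : 'I_n := [arg min_(w < v | anc par v w) lab w].

Lemma anc_argbeta v : anc par v (argbeta v).
Proof. by rewrite /argbeta; case: arg_minnP => //; apply: anc_refl. Qed.

Lemma beta_argbeta v : beta par v = lab (argbeta v).
Proof.
rewrite /argbeta; case: arg_minnP => [|w vw wmin]; first exact: anc_refl.
apply/eqP; rewrite eqn_leq beta_le //.
by apply: bigmin_ge; [exact: leqW (ltn_ord w) | apply: wmin].
Qed.

Lemma gap_start_beta i u :
  gap_start par i u -> beta par u = lab i ->
  argbeta u = i /\ ~~ improper_child par u.
Proof.
case/and3P=> _ _ root_or_lt beta_u; split.
  by apply: lab_inj; rewrite -beta_argbeta.
rewrite /improper_child negb_and negbK -leqNgt beta_u.
by case/orP: root_or_lt => [-> | /ltnW ->]; rewrite ?orbT.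
Qed.

End Descendants.

Section RootedTree.
Variables (n : nat) (par : 'I_n -> 'I_n).
Hypothesis tree : is_rooted_cayley_tree par.
Implicit Types (i u v w : 'I_n).

Lemma par_root v : is_root v -> par v = v.
Proof. by case/andP: tree => /forallP root_fixed _ /(implyP (root_fixed v))/eqP. Qed.

Lemma is_root_iter m v : n <= m -> is_root (iter m par v).
Proof.
case/andP: tree => _ /forallP reach_root le_nm.
by rewrite -(subnK le_nm) iterD iter_fix // par_root.
Qed.

Lemma cycle_root k v : iter k.+1 par v = v -> is_root v.
Proof.
move=> cyc; have <- : iter (n * k.+1) par v = v by rewrite iterM iter_fix.
by apply: is_root_iter; rewrite leq_pmulr.
Qed.

(* The parent of u lies on the greater ancestors path started at u', so its
   label is >= lab i, which forces u to be the root. *)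
Lemma gap_start_above i u u' :
  gap_start par i u -> gap_start par i u' ->
  anc par u' (par u) -> anc par (par u) i -> u' = u.
Proof.
case/and3P=> _ _ root_or_lt /and3P[_ /forallP above_i _] u'_pu pu_i.
have u_root : is_root u.
  case/orP: root_or_lt => // lt_pu_i.
  by have := implyP (above_i (par u)); rewrite u'_pu pu_i leqNgt lt_pu_i => /(_ isT).
case/ancP: u'_pu => k _ <-.
by rewrite (par_root u_root) iter_fix // par_root.
Qed.

Lemma gap_start_uniq i u u' :
  gap_start par i u -> gap_start par i u' -> u = u'.
Proof.
move=> gu gu'; have /and3P[/ancP[k kn iter_k] _ _] := gu.
have /and3P[/ancP[k' k'n iter_k'] _ _] := gu'.
wlog le_kk' : u u' k k' gu gu' kn k'n iter_k iter_k' / k <= k'.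
  move=> wlog_k; case: (leqP k k') => [le_kk' | /ltnW le_k'k].
    exact: (wlog_k u u' k k').
  exact/esym/(wlog_k u' u k' k).
move: le_kk'; rewrite leq_eqVlt => /predU1P[eq_kk' | lt_kk'].
  by rewrite -iter_k -iter_k' eq_kk'.
have par_u : par u = iter k.+1 par i by rewrite -iter_k.
apply/esym/(gap_start_above gu gu'); apply/ancP.
  exists (k' - k.+1); first exact: leq_trans (leq_subr _ _) k'n.
  by rewrite par_u -iterD subnK.
by exists k.+1; [apply: leq_trans lt_kk' k'n | rewrite par_u].
Qed.

Lemma proper_gap_start v :
  ~~ improper_child par v -> gap_start par (argbeta par v) v.
Proof.
rewrite /improper_child negb_and negbK -leqNgt => root_or_le.
apply/and3P; split; first exact: anc_argbeta.
  apply/forallP => w; apply/implyP => /andP[vw _].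
  by rewrite -beta_argbeta beta_le.
case: (boolP (is_root v)) root_or_le => //= v_nonroot.
rewrite beta_argbeta leq_eqVlt => /orP[/eqP /lab_inj par_v | //].
case/ancP: (anc_argbeta par v) => k _ iter_k.
by case/negP: v_nonroot; apply: (@cycle_root k); rewrite iterSr par_v.
Qed.

Lemma leading_argbeta :
  [set i | leading par i] = argbeta par @: [set v | ~~ improper_child par v].
Proof.
apply/setP => i; rewrite inE; apply/existsP/imsetP.
  case=> u /andP[gu /eqP beta_u]; have [<- proper_u] := gap_start_beta gu beta_u.
  by exists u; rewrite ?inE.
case=> v; rewrite inE => proper_v ->; exists v.
by rewrite proper_gap_start //= beta_argbeta.
Qed.

End RootedTree.

Theorem lemma11 (n : nat) (hn : 1 <= n) (par : 'I_n -> 'I_n) :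
  is_rooted_cayley_tree par -> lead par = n - impe par.
Proof.
move=> tree; rewrite /lead (leading_argbeta tree) card_in_imset.
  have -> : [set v | ~~ improper_child par v] = ~: [set v | improper_child par v].
    by apply/setP => v; rewrite !inE.
  by rewrite cardsCs setCK card_ord.
move=> v v'; rewrite !inE => proper_v proper_v' eq_arg.
apply: (gap_start_uniq tree (proper_gap_start tree proper_v)).
by rewrite eq_arg proper_gap_start.
Qed.
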